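(* Let $L$ be a linear forest with $k$ vertices. Let $G$ and $G'$ be graphs, each of which is a disjoint union of paths each having at least $k-1$ vertices, such that $|V(G)|=|V(G')|$ and $|E(G)|=|E(G')|$. Then $s(G,L)=s(G',L)$; that is, the number of induced copies of $L$ in such a graph depends only on $L$, the number of vertices, and the number of edges.
   Context: A linear forest is a disjoint union of paths. For graphs $G$ and $H$, $s(G,H)$ is the number of vertex subsets $X\subseteq V(G)$ such that the induced subgraph $G[X]$ is isomorphic to $H$. *)

From mathcomp Require Import all_boot.
Set Implicit Arguments. Unset Strict Implicit. Unset Printing Implicit Defensive.

Definition simple_graph (T : finType) (e : rel T) : Prop :=
  symmetric e /\ irreflexive e.

Definition isomorphic (T1 T2 : finType) (e1 : rel T1) (e2 : rel T2) : bool :=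
  [exists f : {ffun T1 -> T2},
    [&& injectiveb f, [forall y, exists x, f x == y]
      & [forall x, forall y, e1 x y == e2 (f x) (f y)]]].

Definition induced_rel (T : finType) (e : rel T) (X : {set T}) :
  rel {x : T | x \in X} := fun x y => e (val x) (val y).
Arguments induced_rel {T} e X.

Definition s_count (T : finType) (e : rel T) (TH : finType) (eH : rel TH) : nat :=
  #|[set X : {set T} | isomorphic (induced_rel e X) eH]|.

Definition path_rel (n : nat) : rel 'I_n :=
  fun i j => (i.+1 == j :> nat) || (j.+1 == i :> nat).

Definition nedges (T : finType) (e : rel T) : nat :=
  #|[set A : {set T} | [exists x, exists y, (A == [set x; y]) && e x y]]|.

Definition disjoint_union_of_paths_min (m : nat) (T : finType) (e : rel T) : Prop :=
  simple_graph e /\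
  exists P : {set {set T}},
    [/\ partition P [set: T],
        (forall A, A \in P -> m <= #|A| /\ isomorphic (induced_rel e A) (@path_rel #|A|))
      & (forall x y, e x y -> pblock P x = pblock P y)].

Definition linear_forest (T : finType) (e : rel T) : Prop :=
  disjoint_union_of_paths_min 1 e.

(** A vertex set [X] of [G] is classified by the number [i] of initial
    vertices of a path [p] of [G] that it contains (it misses the next one).
    These [i] vertices join a set [R] of already chosen vertices having no
    edges to the rest of [G], and [p] loses its first [i + 1] vertices.
    Hence one counts the [X] for which [G[X ∪ R]] is a copy of [L], where all
    paths have at least [t - 1] vertices for [t = |L| - |R|], and shows by
    induction on the number of vertices that this count depends only on the
    isomorphism type of [G[R]], the number of paths and the number of
    vertices.  If both graphs have a path with at least [t] vertices, peel
    it: the terms with [i > t] vanish and the others agree by induction.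
    Otherwise all paths on both sides have exactly [t - 1] vertices, and
    graphs with the same multiset of path lengths are handled by the same
    peeling.  Finally, a disjoint union of paths has [|V(G)| - |E(G)|]
    paths. *)

From mathcomp Require Import all_boot zify.
Set Implicit Arguments. Unset Strict Implicit. Unset Printing Implicit Defensive.

Section SeqAdj.
Variable T : eqType.
Implicit Types (s : seq T) (x y : T).

(* Only meaningful for duplicate-free [s], as [index] finds first occurrences. *)
Definition seq_adj s : rel T := fun x y =>
  [&& x \in s, y \in s & ((index x s).+1 == index y s) || ((index y s).+1 == index x s)].

Lemma seq_adjC s x y : seq_adj s x y = seq_adj s y x.
Proof. by rewrite /seq_adj andbCA orbC. Qed.

Lemma seq_adj_mem s x y : seq_adj s x y -> (x \in s) && (y \in s).
Proof. by case/and3P=> -> ->. Qed.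

Lemma seq_adj_catl s1 s2 x y :
  x \in s1 -> y \in s1 -> seq_adj (s1 ++ s2) x y = seq_adj s1 x y.
Proof. by move=> xs ys; rewrite /seq_adj !mem_cat !index_cat xs ys. Qed.

Lemma seq_adj_catr s1 s2 x y :
  x \notin s1 -> y \notin s1 -> seq_adj (s1 ++ s2) x y = seq_adj s2 x y.
Proof.
move=> xs ys; rewrite /seq_adj !mem_cat !index_cat (negbTE xs) (negbTE ys).
by rewrite -!addnS !eqn_add2l.
Qed.

Lemma seq_adj_take s i x y :
  x \in take i s -> y \notin take i.+1 s -> seq_adj s x y = false.
Proof.
move=> /index_ltn ltx yt; apply/negbTE/and3P => -[_ ys /orP[]/eqP].
all: by move: yt; rewrite in_take //; lia.
Qed.

Lemma seq_adj_cons2 (a b : T) q x y : a \notin b :: q ->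
  seq_adj [:: a, b & q] x y =
  [|| (x == a) && (y == b), (x == b) && (y == a) | seq_adj (b :: q) x y].
Proof.
move=> aq; have ab : a != b by apply: contraNneq aq => ->; apply: mem_head.
have adj_a z : seq_adj [:: a, b & q] a z = (z == b).
  rewrite /seq_adj mem_head /= eqxx.
  have [->|za] := eqVneq z a; first by rewrite /= andbF (negbTE ab).
  by rewrite !inE (negbTE za) /= eqSS; case: eqVneq => //= _; rewrite andbF.
have nadj z : seq_adj (b :: q) a z = false.
  by apply/negbTE; apply: contra aq => /seq_adj_mem/andP[].
have [->|xa] := eqVneq x a; first by rewrite adj_a nadj ?eqxx (negbTE ab) /= !orbF.
have [->|ya] := eqVneq y a.
  by rewrite seq_adjC adj_a seq_adjC nadj ?eqxx /= !orbF andbT.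
by rewrite -cat1s seq_adj_catr ?inE ?andbF.
Qed.

Lemma has_seq_adj_notinl (ps : seq (seq T)) x y :
  x \notin flatten ps -> has (fun p => seq_adj p x y) ps = false.
Proof.
move=> xps; apply/hasPn => p pin; apply: contra xps => /seq_adj_mem/andP[xp _].
by apply/flattenP; exists p.
Qed.

Lemma has_seq_adj_notinr (ps : seq (seq T)) x y :
  y \notin flatten ps -> has (fun p => seq_adj p x y) ps = false.
Proof.
move=> yps; rewrite -(has_seq_adj_notinl x yps).
by apply: eq_has => p; apply: seq_adjC.
Qed.

End SeqAdj.

Lemma seq_adj_map (T T' : eqType) (f : T -> T') s x y :
  injective f -> seq_adj (map f s) (f x) (f y) = seq_adj s x y.
Proof. by move=> fi; rewrite /seq_adj !mem_map // !index_map. Qed.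

Lemma seq_adj_enum_ord n (i j : 'I_n) : seq_adj (enum 'I_n) i j = path_rel i j.
Proof. by rewrite /seq_adj !mem_enum !index_enum_ord. Qed.

Section SeqFacts.
Variable T : eqType.

Lemma uniq_cat_notin (s1 s2 : seq T) x : uniq (s1 ++ s2) -> x \in s1 -> x \notin s2.
Proof. by rewrite cat_uniq => /and3P[_ /hasPn notin _]; apply: contraL => /notin. Qed.

Lemma all_leq_shape_drop_rem m i (q : seq T) qs :
  q \in qs -> all (leq m.-1) (shape qs) -> m <= size q ->
  all (leq (m - i).-1) (shape (drop i.+1 q :: rem q qs)).
Proof.
move=> qin; rewrite (perm_all _ (perm_map size (perm_to_rem qin))) /= size_drop.
case/andP=> _ Arem mq; apply/andP; split; first lia.
by apply: sub_all Arem => n; apply: leq_trans; lia.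
Qed.

End SeqFacts.

Lemma sumn_eq_nseq m (l : seq nat) :
  all (leq m) l -> sumn l <= size l * m -> l = nseq (size l) m.
Proof.
elim: l => //= n l IH /andP[mn Al] le.
have El : l = nseq (size l) m by apply: IH => //; move: le; rewrite mulSn; lia.
rewrite -El; congr (_ :: _); move: le; rewrite {1}El sumn_nseq mulSn; lia.
Qed.

Lemma eq_of_sumn_short m (l l' : seq nat) :
  all (leq m) l -> all (leq m) l' -> size l = size l' -> sumn l = sumn l' ->
  ~~ has (leq m.+1) l -> l' = l.
Proof.
move=> Al Al' sl sll /hasPn short.
have /all_pred1P El : all (pred1 m) l.
  by apply/allP => n nl; rewrite /= eqn_leq (allP Al n nl) andbT leqNgt short.
rewrite El sl; apply: sumn_eq_nseq => //.
by rewrite -sll El sumn_nseq sl mulnC.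
Qed.

Section Isomorphism.
Variables (T1 T2 T3 : finType) (e1 : rel T1) (e2 : rel T2) (e3 : rel T3).

Lemma isomorphic_sym : isomorphic e1 e2 -> isomorphic e2 e1.
Proof.
case/existsP=> f /and3P[/injectiveP fi /forallP fs /forallP fe].
pose g y := xchoose (existsP (fs y)).
have fgK y : f (g y) = y by apply/eqP/(xchooseP (existsP (fs y))).
apply/existsP; exists [ffun y => g y]; apply/and3P; split.
- by apply/injectiveP => y y'; rewrite !ffunE => /(congr1 f); rewrite !fgK.
- apply/forallP => x; apply/existsP; exists (f x).
  by rewrite ffunE; apply/eqP/fi; rewrite fgK.
- apply/forallP => y; apply/forallP => y'; rewrite !ffunE eq_sym.
  by rewrite -{2}(fgK y) -{2}(fgK y'); apply: (forallP (fe _)).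
Qed.

Lemma isomorphic_trans : isomorphic e1 e2 -> isomorphic e2 e3 -> isomorphic e1 e3.
Proof.
case/existsP=> f /and3P[/injectiveP fi /forallP fs /forallP fe].
case/existsP=> g /and3P[/injectiveP gi /forallP gs /forallP ge].
apply/existsP; exists [ffun x => g (f x)]; apply/and3P; split.
- by apply/injectiveP => x y; rewrite !ffunE => /gi /fi.
- apply/forallP => z; have /existsP[y /eqP<-] := gs z.
  by have /existsP[x /eqP<-] := fs y; apply/existsP; exists x; rewrite ffunE.
- apply/forallP => x; apply/forallP => y; rewrite !ffunE.
  by rewrite (eqP (forallP (fe x) y)) (forallP (ge (f x)) (f y)).
Qed.

Lemma isomorphic_card : isomorphic e1 e2 -> #|T1| = #|T2|.
Proof.
case/existsP=> f /and3P[/injectiveP fi /forallP fs _].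
rewrite -(card_codom fi); apply: eq_card => y.
by have /existsP[x /eqP<-] := fs y; rewrite codom_f inE.
Qed.

End Isomorphism.

(* The witness is a total function, so some map [T -> T'] is needed even
   when [Z] is empty. *)
Definition iso_on (T T' : finType) (e : rel T) (Z : {set T})
    (e' : rel T') (Z' : {set T'}) :=
  exists f : T -> T', [/\ {in Z &, injective f}, f @: Z = Z' &
                         {in Z &, forall x y, e x y = e' (f x) (f y)}].

Section IsoOn.
Variables (T T' : finType) (e : rel T) (e' : rel T').

Lemma iso_on_isomorphic Z Z' :
  iso_on e Z e' Z' -> isomorphic (induced_rel e Z) (induced_rel e' Z').
Proof.
case=> f [fi fZ fe].
have fZ' (x : {x | x \in Z}) : f (val x) \in Z' by rewrite -fZ imset_f ?(valP x).
apply/existsP; exists [ffun x => exist (fun y => y \in Z') (f (val x)) (fZ' x)].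
apply/and3P; split.
- apply/injectiveP => x y; rewrite !ffunE => /(congr1 val)/fi fxy.
  by apply/val_inj/fxy; apply: valP.
- apply/forallP => y; have : val y \in f @: Z by rewrite fZ (valP y).
  case/imsetP=> x xZ yE; apply/existsP; exists (exist _ x xZ).
  by rewrite ffunE; apply/eqP/val_inj; rewrite yE.
- by apply/forallP => x; apply/forallP => y; rewrite !ffunE; apply/eqP/fe; apply: valP.
Qed.

Lemma iso_on_card Z Z' : iso_on e Z e' Z' -> #|Z| = #|Z'|.
Proof. by case=> f [fi <- _]; rewrite card_in_imset. Qed.

Lemma iso_on_set0 (f : T -> T') : iso_on e set0 e' set0.
Proof.
by exists f; split; [move=> x y; rewrite inE | rewrite imset0 | move=> x y; rewrite inE].
Qed.

Lemma iso_on_setU Z1 Z2 Z1' Z2' :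
  iso_on e Z1 e' Z1' -> iso_on e Z2 e' Z2' ->
  [disjoint Z1 & Z2] -> [disjoint Z1' & Z2'] ->
  {in Z1 & Z2, forall x y, ~~ e x y && ~~ e y x} ->
  {in Z1' & Z2', forall x y, ~~ e' x y && ~~ e' y x} ->
  iso_on e (Z1 :|: Z2) e' (Z1' :|: Z2').
Proof.
case=> f1 [f1i f1Z f1e] [f2 [f2i f2Z f2e]] dZ dZ' sep sep'.
pose f x := if x \in Z1 then f1 x else f2 x.
have f1P x : x \in Z1 -> f x = f1 x /\ f x \in Z1'.
  by move=> xZ; rewrite /f xZ -f1Z imset_f.
have f2P x : x \in Z2 -> f x = f2 x /\ f x \in Z2'.
  by move=> xZ; rewrite /f (disjointFl dZ xZ) -f2Z imset_f.
exists f; split.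
- move=> x y; rewrite !inE => /orP[] xZ /orP[] yZ.
  + by have [-> _] := f1P x xZ; have [-> _] := f1P y yZ; apply: f1i.
  + have [_ fx] := f1P x xZ; have [_ fy] := f2P y yZ.
    by move=> fxy; move: fx; rewrite fxy (disjointFl dZ' fy).
  + have [_ fx] := f2P x xZ; have [_ fy] := f1P y yZ.
    by move=> fxy; move: fy; rewrite -fxy (disjointFl dZ' fx).
  + by have [-> _] := f2P x xZ; have [-> _] := f2P y yZ; apply: f2i.
- rewrite imsetU -f1Z -f2Z; congr (_ :|: _); apply: eq_in_imset => x xZ.
    by have [] := f1P x xZ.
  by have [] := f2P x xZ.
- move=> x y; rewrite !inE => /orP[] xZ /orP[] yZ.
  + by have [-> _] := f1P x xZ; have [-> _] := f1P y yZ; apply: f1e.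
  + have [_ fx] := f1P x xZ; have [_ fy] := f2P y yZ.
    have /andP[/negbTE-> _] := sep x y xZ yZ.
    by have /andP[/negbTE-> _] := sep' _ _ fx fy.
  + have [_ fx] := f2P x xZ; have [_ fy] := f1P y yZ.
    have /andP[_ /negbTE->] := sep y x yZ xZ.
    by have /andP[_ /negbTE->] := sep' _ _ fy fx.
  + by have [-> _] := f2P x xZ; have [-> _] := f2P y yZ; apply: f2e.
Qed.

(* [f0] only supplies default values for [nth]. *)
Lemma iso_on_seq (f0 : T -> T') s s' :
  uniq s -> uniq s' -> size s = size s' ->
  {in s &, forall x y, e x y = seq_adj s x y} ->
  {in s' &, forall x y, e' x y = seq_adj s' x y} ->
  iso_on e [set:: s] e' [set:: s'].
Proof.
move=> us us' ss es es'.
pose f x := nth (f0 x) s' (index x s).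
have fs x : x \in s -> f x \in s' by move=> xs; rewrite mem_nth // -ss index_mem.
have idx x : x \in s -> index (f x) s' = index x s.
  by move=> xs; rewrite index_uniq // -ss index_mem.
have fi : {in s &, injective f}.
  by move=> x y xs ys fxy; apply: (index_inj x xs ys); rewrite /= -[LHS]idx // fxy idx.
exists f; split.
- by move=> x y; rewrite !inE; apply: fi.
- apply/eqP; rewrite eqEcard card_in_imset => [|x y]; last by rewrite !inE; apply: fi.
  rewrite !cardsE (card_uniqP us) (card_uniqP us') ss leqnn andbT.
  by apply/subsetP => _ /imsetP[x xs ->]; move: xs; rewrite !inE; apply: fs.
- move=> x y; rewrite !inE => xs ys.
  by rewrite es // es' ?fs // /seq_adj !fs // !idx // xs ys.
Qed.

End IsoOn.

(** * Counting extensions of a partial copy of [L] *)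

Section Counting.
Variables (TL : finType) (eL : rel TL).

Definition is_copy (T : finType) (e : rel T) (Z : {set T}) :=
  isomorphic (induced_rel e Z) eL.

Definition ext_count (T : finType) (e : rel T) (U R : {set T}) :=
  #|[set X : {set T} | (X \subset U) && is_copy e (X :|: R)]|.

Variables (T T' : finType) (e : rel T) (e' : rel T').

Lemma s_count_ext_count : s_count e eL = ext_count e setT set0.
Proof. by apply: eq_card => X; rewrite !inE subsetT setU0. Qed.

Lemma is_copy_card (Z : {set T}) : is_copy e Z -> #|Z| = #|TL|.
Proof.
by move/isomorphic_card <-; rewrite card_sig; apply: eq_card => x; rewrite !inE.
Qed.

Lemma is_copy_iso_on Z Z' : iso_on e Z e' Z' -> is_copy e Z = is_copy e' Z'.
Proof.
move/iso_on_isomorphic => iZ; apply/idP/idP; apply: isomorphic_trans => //.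
exact: isomorphic_sym.
Qed.

Lemma ext_count_set0 (R : {set T}) : ext_count e set0 R = is_copy e R.
Proof.
rewrite /ext_count (_ : [set X | _] = if is_copy e R then [set set0] else set0).
  by case: ifP; rewrite ?cards1 ?cards0.
apply/setP => X; rewrite !inE subset0.
have [->|X0] := eqVneq X set0; case: ifP => cR.
all: by rewrite ?set0U ?inE ?cR ?eqxx ?(negbTE X0).
Qed.

Lemma ext_count_full (U R : {set T}) :
  [disjoint U & R] -> #|TL| <= #|R| -> ext_count e U R = is_copy e R.
Proof.
move=> dUR leR; rewrite -ext_count_set0; apply: eq_card => X; rewrite !inE subset0.
apply/andP/andP => [[XU cXR]|[/eqP-> cR]]; last by rewrite sub0set.
split=> //; rewrite -subset0 -(disjoint_setI0 dUR) subsetI XU.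
have /eqP XR : R == X :|: R by rewrite eqEcard subsetUr (is_copy_card cXR).
by rewrite XR subsetUl.
Qed.

Lemma ext_count_eq0 (U R : {set T}) : #|TL| < #|R| -> ext_count e U R = 0.
Proof.
move=> ltR; apply/eqP; rewrite cards_eq0; apply/eqP/setP => X; rewrite !inE.
apply/negbTE/andP => -[_ /is_copy_card cXR].
by move: ltR; rewrite -cXR ltnNge subset_leq_card ?subsetUr.
Qed.

Lemma ext_countU1 (U R : {set T}) a :
  a \notin U -> ext_count e (a |: U) R = ext_count e U R + ext_count e U (a |: R).
Proof.
move=> aU; rewrite /ext_count -(cardsID [set X : {set T} | a \in X]) addnC; congr (_ + _).
  have subU (X : {set T}) : (X \subset U) = (X \subset a |: U) && (a \notin X).
    by rewrite -subsetD1 setU1K.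
  by apply: eq_card => X; rewrite !inE subU andbCA andbA.
set S := [set Y | _ && is_copy e (Y :|: (a |: R))].
have aY Y : Y \in S -> a \notin Y.
  by rewrite inE => /andP[/subsetP YU _]; apply: contra aU => /YU.
rewrite -(card_in_imset (f := fun Y => a |: Y) (D := S)); last first.
  by move=> Y Y' /aY nY /aY nY' /(congr1 (fun X => X :\ a)); rewrite !setU1K.
apply: eq_card => X; rewrite !inE; apply/idP/imsetP => [|[Y YS ->]].
  case/andP=> /andP[XU cXR] aX; exists (X :\ a); last by rewrite setD1K.
  rewrite inE -(setU1K aU) setSD //= setUCA setUA setD1K //.
by move: YS; rewrite !inE eqxx andbT setUCA setUA => /andP[YU ->]; rewrite setUS.
Qed.

End Counting.

Record path_system (T : finType) (e : rel T) (ps : seq (seq T)) (R : {set T}) : Prop :=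
  PathSystem {
    path_system_uniq : uniq (flatten ps);
    path_system_disjoint : [disjoint [set:: flatten ps] & R];
    path_system_adj :
      {in flatten ps &, forall x y, e x y = has (fun p => seq_adj p x y) ps};
    path_system_sep : {in R & flatten ps, forall x y, ~~ e x y && ~~ e y x}
  }.

Section PathSystem.
Variables (T : finType) (e : rel T).
Implicit Types (p : seq T) (ps rest : seq (seq T)) (R : {set T}).

Lemma set_flatten_rem ps p :
  p \in ps -> [set:: flatten ps] = [set:: p ++ flatten (rem p ps)].
Proof.
by move=> pin; apply/setP => x; rewrite !inE (perm_mem (perm_flatten (perm_to_rem pin))).
Qed.

Lemma path_system_rem ps p R :
  p \in ps -> path_system e ps R -> path_system e (p :: rem p ps) R.
Proof.
move=> pin [u d a s]; have pq := perm_to_rem pin; have fl := perm_mem (perm_flatten pq).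
split.
- by rewrite -(perm_uniq (perm_flatten pq)).
- by rewrite /= -set_flatten_rem.
- by move=> x y; rewrite -!fl -(perm_has _ pq); apply: a.
- by move=> x y xR; rewrite -fl; apply: s.
Qed.

Lemma path_system_head_adj p rest R :
  path_system e (p :: rest) R -> {in p &, forall x y, e x y = seq_adj p x y}.
Proof.
case=> /= u _ a _ x y xp yp.
by rewrite a ?mem_cat ?xp ?yp //= has_seq_adj_notinl ?orbF ?(uniq_cat_notin u xp).
Qed.

Lemma path_system_take p rest R i :
  path_system e (p :: rest) R ->
  [/\ uniq (take i p), {in take i p &, forall x y, e x y = seq_adj (take i p) x y},
      [disjoint R & [set:: take i p]] &
      {in R & [set:: take i p], forall x y, ~~ e x y && ~~ e y x}].
Proof.
move=> S; have [/= u d _ s] := S.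
have tp x : x \in take i p -> x \in p ++ flatten rest by rewrite mem_cat => /mem_take ->.
split.
- by apply: take_uniq; move: u; rewrite cat_uniq => /and3P[].
- move=> x y xt yt; rewrite (path_system_head_adj S) ?(mem_take xt) ?(mem_take yt) //.
  by rewrite -{1}(cat_take_drop i p) seq_adj_catl.
- rewrite disjoint_sym; apply: disjointWl d.
  by apply/subsetP => x; rewrite !inE; apply: tp.
- by move=> x y xR; rewrite inE => /tp; apply: s.
Qed.

Lemma card_setU_take p rest R i :
  path_system e (p :: rest) R -> i <= size p -> #|R :|: [set:: take i p]| = #|R| + i.
Proof.
move=> /(path_system_take i)[u _ d _] le_ip.
rewrite cardsU (disjoint_setI0 d) cards0 subn0 cardsE (card_uniqP u) size_takel //.
Qed.

Lemma path_system_drop p rest R i :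
  path_system e (p :: rest) R ->
  path_system e (drop i.+1 p :: rest) (R :|: [set:: take i p]).
Proof.
case=> /= u d a s; set q := drop i.+1 p ++ flatten rest.
have uq : uniq (take i.+1 p ++ q) by rewrite catA cat_take_drop.
have tq x : x \in q -> x \notin take i.+1 p.
  by apply: contraL => /(uniq_cat_notin uq).
have qp x : x \in q -> x \in p ++ flatten rest.
  by rewrite !mem_cat => /orP[/mem_drop ->|->]; rewrite ?orbT.
split=> /=.
- by move: uq; rewrite cat_uniq => /and3P[].
- rewrite disjoints_subset; apply/subsetP => x; rewrite !inE => xq; apply/norP; split.
    by rewrite (disjointFr d) // inE qp.
  by apply: contra (tq x xq); rewrite -(take_takel p (leqnSn i)); apply: mem_take.
- move=> x y xq yq; rewrite a ?qp // -{1}(cat_take_drop i.+1 p) /=.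
  by rewrite seq_adj_catr ?tq.
- move=> x y; rewrite !inE => /orP[xR yq|xt yq]; first exact/s/qp.
  have xp := mem_take xt; have xr := uniq_cat_notin u xp.
  have xpr : x \in p ++ flatten rest by rewrite mem_cat xp.
  rewrite (a x y xpr (qp y yq)) (a y x (qp y yq) xpr) /= (seq_adjC p y).
  rewrite (seq_adj_take xt) ?tq //.
  by rewrite has_seq_adj_notinl ?has_seq_adj_notinr.
Qed.

End PathSystem.

Lemma iso_on_take (T T' : finType) (e : rel T) (e' : rel T') p rest p' rest' R R' i :
  path_system e (p :: rest) R -> path_system e' (p' :: rest') R' ->
  i <= size p -> i <= size p' -> iso_on e R e' R' ->
  iso_on e (R :|: [set:: take i p]) e' (R' :|: [set:: take i p']).
Proof.
move=> /(path_system_take i)[u a d s] /(path_system_take i)[u' a' d' s'] lep lep' iR.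
have [f0 _] := iR; apply: iso_on_setU => //.
by apply: (iso_on_seq f0); rewrite ?size_takel.
Qed.

(** * The invariance of the number of extensions *)

Section PathCounting.
Variables (TL : finType) (eL : rel TL).
Local Notation ext_count := (ext_count eL).

Lemma ext_count_full_iso_on (T T' : finType) (e : rel T) (e' : rel T') ps ps' R R' :
  path_system e ps R -> path_system e' ps' R' -> iso_on e R e' R' -> #|TL| <= #|R| ->
  ext_count e [set:: flatten ps] R = ext_count e' [set:: flatten ps'] R'.
Proof.
move=> S S' iR le_TR; have le_TR' : #|TL| <= #|R'| by rewrite -(iso_on_card iR).
rewrite (ext_count_full _ _ (path_system_disjoint S) le_TR).
by rewrite (ext_count_full _ _ (path_system_disjoint S') le_TR') (is_copy_iso_on eL iR).
Qed.

Lemma ext_count_peel (T : finType) (e : rel T) p rest R :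
  uniq (p ++ flatten rest) ->
  ext_count e [set:: p ++ flatten rest] R =
  \sum_(i < (size p).+1)
     ext_count e [set:: drop i.+1 p ++ flatten rest] (R :|: [set:: take i p]).
Proof.
elim: p R => [|a p IH] R /=; first by rewrite big_ord1 set_nil setU0.
case/andP=> ap up; rewrite set_cons ext_countU1 ?inE // big_ord_recl /=.
rewrite ?take0 ?drop0 set_nil setU0 (IH (a |: R)) //; congr (_ + _).
by apply: eq_bigr => i _; rewrite set_cons setUCA setUA.
Qed.

Lemma ext_count_peel_trunc (T : finType) (e : rel T) p rest R :
  path_system e (p :: rest) R -> #|TL| - #|R| <= size p ->
  ext_count e [set:: p ++ flatten rest] R =
  \sum_(i < (#|TL| - #|R|).+1)
     ext_count e [set:: drop i.+1 p ++ flatten rest] (R :|: [set:: take i p]).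
Proof.
move=> S le_tp; rewrite ext_count_peel ?(path_system_uniq S) //.
pose F i := ext_count e [set:: drop i.+1 p ++ flatten rest] (R :|: [set:: take i p]).
have le_tp1 : (#|TL| - #|R|).+1 <= (size p).+1 by rewrite ltnS; exact: le_tp.
rewrite [RHS](big_ord_widen (size p).+1 F le_tp1) [RHS]big_mkcond.
apply: eq_bigr => -[i /= lt_ip] _; case: ifPn => [_|]; first by [].
rewrite -leqNgt => lt_ti; apply: ext_count_eq0.
have i_gt0 : 0 < i := leq_ltn_trans (leq0n _) lt_ti.
by rewrite (card_setU_take S lt_ip) -ltn_psubLR.
Qed.

Lemma ext_count_perm_shape (T T' : finType) (e : rel T) (e' : rel T') ps ps' R R' :
  path_system e ps R -> path_system e' ps' R' -> iso_on e R e' R' ->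
  perm_eq (shape ps) (shape ps') ->
  ext_count e [set:: flatten ps] R = ext_count e' [set:: flatten ps'] R'.
Proof.
have [N] := ubnP (size (flatten ps)); elim: N => // N IH in T T' e e' ps ps' R R' *.
rewrite ltnS => leN S S' iR sh.
have [fl0|] := eqVneq (flatten ps) [::].
  have : size (flatten ps') == 0.
    by rewrite size_flatten -(perm_sumn sh) -size_flatten fl0.
  rewrite size_eq0 fl0 => /eqP->.
  by rewrite set_nil !ext_count_set0 (is_copy_iso_on eL iR).
move=> fl_nil; have [x xps] : exists x, x \in flatten ps.
  by case: (flatten ps) fl_nil => // x fl _; exists x; rewrite mem_head.
have /flattenP[p pin xp] := xps.
have p_gt0 : 0 < size (p : seq T) by rewrite lt0n size_eq0; apply: contraTneq xp => ->.
have /mapP[p' pin' szp] : size p \in shape ps' by rewrite -(perm_mem sh) map_f.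
have S1 := path_system_rem pin S; have S1' := path_system_rem pin' S'.
rewrite (set_flatten_rem pin) (set_flatten_rem pin').
rewrite !ext_count_peel ?(path_system_uniq S1) ?(path_system_uniq S1') // -szp.
apply: eq_bigr => -[i /= le_ip] _.
have le_ip' : i <= size p' by rewrite -szp.
have fl1 := perm_size (perm_flatten (perm_to_rem pin)); rewrite /= size_cat in fl1.
apply: (IH _ _ _ _ _ _ _ _ _ (path_system_drop i S1) (path_system_drop i S1')).
- by rewrite /= size_cat size_drop; lia.
- exact: iso_on_take S1 S1' le_ip le_ip' iR.
- rewrite /= !size_drop szp perm_cons -(perm_cons (size p)).
  apply: perm_trans (perm_trans _ sh) _.
    by rewrite perm_sym; apply: (perm_map size (perm_to_rem pin)).
  by rewrite szp; apply: (perm_map size (perm_to_rem pin')).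
Qed.

Lemma ext_count_long_paths (T T' : finType) (e : rel T) (e' : rel T') ps ps' R R' :
  path_system e ps R -> path_system e' ps' R' -> iso_on e R e' R' ->
  size ps = size ps' -> size (flatten ps) = size (flatten ps') ->
  all (leq (#|TL| - #|R|).-1) (shape ps) -> all (leq (#|TL| - #|R|).-1) (shape ps') ->
  ext_count e [set:: flatten ps] R = ext_count e' [set:: flatten ps'] R'.
Proof.
have [N] := ubnP (size (flatten ps)); elim: N => // N IH in T T' e e' ps ps' R R' *.
rewrite ltnS => leN S S' iR sz fl; have cR := iso_on_card iR.
set t := #|TL| - #|R| => A A'.
have [t0|t_gt0] := posnP t.
  by apply: ext_count_full_iso_on S S' iR _; rewrite -subn_eq0 -/t t0.
have [/andP[]|short] := boolP (has (leq t) (shape ps) && has (leq t) (shape ps')).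
  move=> /hasP[_ /mapP[p pin ->] tp] /hasP[_ /mapP[p' pin' ->] tp'].
  have S1 := path_system_rem pin S; have S1' := path_system_rem pin' S'.
  have tp'' : #|TL| - #|R'| <= size p' by rewrite -cR.
  rewrite (set_flatten_rem pin) (set_flatten_rem pin').
  rewrite (ext_count_peel_trunc S1 tp) (ext_count_peel_trunc S1' tp'') -cR -/t.
  apply: eq_bigr => -[i /= le_it] _.
  have lep : i <= size (p : seq T) by lia.
  have lep' : i <= size (p' : seq T') by lia.
  have iR' := iso_on_take S1 S1' lep lep' iR.
  have S2 := path_system_drop i S1; have S2' := path_system_drop i S1'.
  have [lt_it|ge_it] := ltnP i t; last first.
    apply: ext_count_full_iso_on S2 S2' iR' _.
    by rewrite (card_setU_take S1 lep); rewrite /t in ge_it; lia.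
  have fl1 := perm_size (perm_flatten (perm_to_rem pin)); rewrite /= size_cat in fl1.
  have fl1' := perm_size (perm_flatten (perm_to_rem pin')); rewrite /= size_cat in fl1'.
  apply: (IH _ _ _ _ _ _ _ _ _ S2 S2' iR').
  - by rewrite /= size_cat size_drop; lia.
  - by rewrite /= !size_rem // sz.
  - by rewrite /= !size_cat !size_drop; lia.
  - by rewrite (card_setU_take S1 lep) subnDA -/t; apply: all_leq_shape_drop_rem.
  - by rewrite (card_setU_take S1 lep) subnDA -/t; apply: all_leq_shape_drop_rem.
apply: ext_count_perm_shape S S' iR _.
have ssz : size (shape ps) = size (shape ps') by rewrite !size_map.
have ssum : sumn (shape ps) = sumn (shape ps') by rewrite -!size_flatten.
move: short A A'; rewrite -(prednK t_gt0) negb_and => /orP[] short A A'.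
  by rewrite (eq_of_sumn_short A A' ssz ssum short).
by rewrite (eq_of_sumn_short A' A (esym ssz) (esym ssum) short).
Qed.

End PathCounting.

(** * Edges of a disjoint union of paths *)

Section EdgeSets.
Variable T : finType.
Implicit Types (r : rel T) (p : seq T) (ps : seq (seq T)).

Definition edge_set r : {set {set T}} :=
  [set A : {set T} | [exists x, exists y, (A == [set x; y]) && r x y]].

Lemma eq_edge_set r1 r2 : r1 =2 r2 -> edge_set r1 = edge_set r2.
Proof.
move=> r12; apply/setP => A; rewrite !inE.
by apply: eq_existsb => x; apply: eq_existsb => y; rewrite r12.
Qed.

Lemma edge_setU r1 r2 :
  edge_set (fun x y => r1 x y || r2 x y) = edge_set r1 :|: edge_set r2.
Proof.
apply/setP => A; rewrite !inE; apply/existsP/orP.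
  case=> x /existsP[y /andP[EA /orP[r|r]]]; [left|right];
    by apply/existsP; exists x; apply/existsP; exists y; rewrite EA r.
by case=> /existsP[x /existsP[y /andP[EA r]]]; exists x; apply/existsP; exists y;
  rewrite EA r ?orbT.
Qed.

Lemma mem_edge_set r A x : A \in edge_set r -> x \in A -> exists y, r x y || r y x.
Proof.
rewrite inE => /existsP[u /existsP[v /andP[/eqP-> ruv]]].
by rewrite !inE => /orP[]/eqP->; [exists v | exists u]; rewrite ruv ?orbT.
Qed.

Lemma edge_set_eq0 r : (forall x y, ~~ r x y) -> edge_set r = set0.
Proof.
move=> r0; apply/setP => A; rewrite !inE.
by apply/existsP => -[x /existsP[y /andP[_]]]; apply/negP/r0.
Qed.

Lemma card_edge_set_seq p : uniq p -> #|edge_set (seq_adj p)| = (size p).-1.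
Proof.
elim: p => [|a [|b q] IH] /=.
- by rewrite edge_set_eq0 ?cards0 // => x y; apply/negP => /seq_adj_mem.
- rewrite edge_set_eq0 ?cards0 // => x y; apply/negP.
  by rewrite /seq_adj !inE => /and3P[/eqP-> /eqP->]; rewrite /= eqxx.
case/andP => aq uq; rewrite (eq_edge_set (fun x y => seq_adj_cons2 x y aq)) !edge_setU.
have -> : edge_set (fun x y => (x == a) && (y == b)) = [set [set a; b]].
  apply/setP => A; rewrite !inE; apply/existsP/eqP => [[x /existsP[y]]|->].
    by case/andP=> /eqP-> /andP[/eqP-> /eqP->].
  by exists a; apply/existsP; exists b; rewrite !eqxx.
have -> : edge_set (fun x y => (x == b) && (y == a)) = [set [set a; b]].
  apply/setP => A; rewrite !inE; apply/existsP/eqP => [[x /existsP[y]]|->].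
    by case/andP=> /eqP-> /andP[/eqP-> /eqP->]; rewrite setUC.
  by exists b; apply/existsP; exists a; rewrite [[set b; a]]setUC !eqxx.
have nE : [set a; b] \notin edge_set (seq_adj (b :: q)).
  apply/negP => /mem_edge_set/(_ (set21 a b))[y /orP[]/seq_adj_mem/andP[]].
    by move=> aq'; rewrite aq' in aq.
  by move=> _ aq'; rewrite aq' in aq.
by rewrite setUA setUid cardsU1 nE IH.
Qed.

Lemma card_edge_set_paths ps : uniq (flatten ps) -> [::] \notin ps ->
  #|edge_set (fun x y => has (fun p => seq_adj p x y) ps)| + size ps = size (flatten ps).
Proof.
elim: ps => [|p ps IH] /=; first by rewrite edge_set_eq0 ?cards0.
rewrite cat_uniq inE negb_or => /and3P[up dis ups] /andP[pn psn].
rewrite edge_setU cardsU (_ : _ :&: _ = set0) ?cards0 ?subn0; last first.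
  apply/setP => A; rewrite in_setI in_set0; apply/negbTE/andP => -[].
  rewrite inE => /existsP[x /existsP[y /andP[/eqP EA /seq_adj_mem/andP[xp _]]]].
  have xA : x \in A by rewrite EA set21.
  move=> /mem_edge_set/(_ xA)[z].
  have xps : x \notin flatten ps by apply: contra dis => xps; apply/hasP; exists x.
  by rewrite has_seq_adj_notinl ?has_seq_adj_notinr.
have p_gt0 : 0 < size p by rewrite lt0n size_eq0 eq_sym.
rewrite card_edge_set_seq // size_cat -IH // addnS -!addSn prednK //.
exact: esym (addnA _ _ _).
Qed.

End EdgeSets.

Lemma nedges_path_system (T : finType) (e : rel T) ps :
  path_system e ps set0 -> [set:: flatten ps] = setT -> [::] \notin ps ->
  size ps + nedges e = size (flatten ps).
Proof.
case=> u _ adj _ cover nil_ps.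
have flat x : x \in flatten ps by have := in_setT x; rewrite -cover inE.
rewrite addnC -(card_edge_set_paths u nil_ps); congr (_ + _).
by rewrite -(eq_edge_set (fun x y => adj x y (flat x) (flat y))).
Qed.

Lemma induced_path_seq (T : finType) (e : rel T) (A : {set T}) :
  isomorphic (induced_rel e A) (@path_rel #|A|) ->
  exists p : seq T, [/\ uniq p, p =i A & {in p &, forall x y, e x y = seq_adj p x y}].
Proof.
case/isomorphic_sym/existsP => h /and3P[/injectiveP hi /forallP hs /forallP he].
pose g j := val (h j); have gi : injective g by move=> j j' /val_inj/hi.
exists (map g (enum 'I_#|A|)); split.
- by rewrite map_inj_uniq ?enum_uniq.
- move=> x; apply/mapP/idP => [[j _ ->]|xA]; first exact: valP.
  by have /existsP[j /eqP hj] := hs (exist _ x xA); exists j; rewrite ?mem_enum // /g hj.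
- move=> _ _ /mapP[j _ ->] /mapP[j' _ ->]; rewrite seq_adj_map // seq_adj_enum_ord.
  by apply/esym/eqP; apply: (forallP (he j) j').
Qed.

Lemma path_system_of_union m (T : finType) (e : rel T) :
  disjoint_union_of_paths_min m e ->
  exists ps : seq (seq T),
    [/\ path_system e ps set0, [set:: flatten ps] = setT, size (flatten ps) = #|T|,
        all (leq m) (shape ps) & size ps + nedges e = #|T|].
Proof.
case=> _ [P [partP blk cross]].
have /fin_all_exists[f fP] : forall A : {set T}, exists p : seq T, A \in P ->
    [/\ uniq p, p =i A & {in p &, forall x y, e x y = seq_adj p x y}].
  move=> A; have [AP|] := boolP (A \in P); last by exists [::].
  by have [_ /induced_path_seq[p pP]] := blk A AP; exists p.
pose ps := map f (enum P).
have [/eqP coverP _ P0] := and3P partP.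
have size_f A : A \in P -> size (f A) = #|A|.
  by case/fP=> u fA _; rewrite -(card_uniqP u); apply: eq_card.
have pblockP x : pblock P x \in P /\ x \in f (pblock P x).
  have xP : x \in cover P by rewrite coverP inE.
  by have PxP := pblock_mem xP; have [_ -> _] := fP _ PxP; rewrite mem_pblock.
have flat x : x \in flatten ps.
  have [PxP xf] := pblockP x; apply/flattenP; exists (f (pblock P x)) => //.
  by rewrite map_f ?mem_enum.
have size_flat : size (flatten ps) = #|T|.
  rewrite size_flatten /shape -map_comp sumnE big_map big_enum /= -cardsT.
  by rewrite (card_partition partP); apply: eq_bigr => A /size_f.
have uniq_flat : uniq (flatten ps).
  by apply: leq_size_uniq (enum_uniq T) (fun x _ => flat x) _; rewrite size_flat cardT.
have adj : {in flatten ps &, forall x y, e x y = has (fun p => seq_adj p x y) ps}.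
  move=> x y _ _; apply/idP/hasP => [exy|[_ /mapP[A AP ->] axy]].
    have [PxP xf] := pblockP x; have [_ yf] := pblockP y.
    exists (f (pblock P x)); first by rewrite map_f ?mem_enum.
    by have [_ _ eA] := fP _ PxP; rewrite -eA // (cross _ _ exy).
  rewrite mem_enum in AP; have [_ _ eA] := fP _ AP.
  by have /andP[xA yA] := seq_adj_mem axy; rewrite eA.
have S : path_system e ps set0.
  split=> //; first by rewrite disjoints_subset setC0 subsetT.
  by move=> x y; rewrite inE.
have cover : [set:: flatten ps] = setT by apply/setP => x; rewrite !inE flat.
exists ps; split=> //.
- apply/allP => _ /mapP[_ /mapP[A AP ->] ->]; rewrite mem_enum in AP.
  by rewrite size_f //; case: (blk A AP).
- rewrite -size_flat nedges_path_system //.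
  apply/mapP => -[A AP fA0]; rewrite mem_enum in AP; have [_ fA _] := fP _ AP.
  have A0 : A = set0 by apply/setP => x; rewrite -fA -fA0 inE.
  by move: AP; rewrite A0 (negbTE P0).
Qed.

Theorem theorem2p4 (k : nat)
  (TL : finType) (eL : rel TL) (TG : finType) (eG : rel TG)
  (TG' : finType) (eG' : rel TG') :
  linear_forest eL -> #|TL| = k ->
  disjoint_union_of_paths_min (k - 1) eG ->
  disjoint_union_of_paths_min (k - 1) eG' ->
  #|TG| = #|TG'| -> nedges eG = nedges eG' ->
  s_count eG eL = s_count eG' eL.
Proof.
move=> _ card_L uG uG' card_G edges_G.
have [ps [S cover size_ps long c]] := path_system_of_union uG.
have [ps' [S' cover' size_ps' long' c']] := path_system_of_union uG'.
pose f x := enum_val (cast_ord card_G (enum_rank x)).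
rewrite !s_count_ext_count -cover -cover'.
apply: (ext_count_long_paths eL S S' (iso_on_set0 eG eG' f)).
- by apply/(@addIn (nedges eG)); rewrite c card_G edges_G c'.
- by rewrite size_ps size_ps'.
- by rewrite cards0 subn0 card_L -subn1.
- by rewrite cards0 subn0 card_L -subn1.
Qed.
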